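(* Let $F\in\mathcal L_n$ be real with $\|F\|_{\mathsf E}\le1$, $F\not\equiv 0$, and let $D^0=(F)_0+D_n^\infty-(F)_\infty$ be its generalized zero divisor. Then every alternation set of $F$ has at most $n+1-D^0(x_* )$ points.
   Context: Let $\mathsf E\subset\overline{\mathbb R}$ be compact, proper, with infinitely many points. Cyclic order: $(t_0,\dots,t_m)$, $m\ge2$, is cyclically ordered if it has no repetitions and some $f\in\mathrm{PSL}(2,\mathbb R)$ has $f(t_0)=\infty$, $f(t_1)<\dots<f(t_m)$; $(a,b)=\{c:(a,c,b)\text{ cyclically ordered}\}$, $[a,b)=(a,b)\cup\{a\}$. Divisors are finitely supported $D:\overline{\mathbb C}\to\mathbb Z$; for rational $f$, $(f)_\infty$, $(f)_0$ are the polar and zero divisors (both $0$ if $f$ is constant); $\mathcal L(D)=\{f\text{ rational}:(f)_\infty\le D\}$. Fix $n\ge1$, an integral divisor $D_n^\infty\ge0$ of degree $n$ supported in $\overline{\mathbb R}\setminus\mathsf E$, $x_*\in\overline{\mathbb R}\setminus\mathsf E$, $\mathcal L_n=\mathcal L(D_n^\infty)$, $\|F\|_{\mathsf E}=\sup_{\mathsf E}|F|$. Real means $F(\bar z)=\overline{F(z)}$. Sign function: $S_n(x)=\sum_{\mathbf c\ne x_*}D_n^\infty(\mathbf c)\chi_{[x_*,\mathbf c)}(x)$. An alternation set of $F$ is a set of distinct points $x_1,\dots,x_m\in\mathsf E$ with $(x_*,x_1,\dots,x_m)$ cyclically ordered and $F(x_j)=(-1)^{m-j-S_n(x_j)}$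 for all $j$. *)

From HB Require Import structures.
From mathcomp Require Import all_boot all_order all_algebra.
From mathcomp Require Import all_classical all_reals.
From mathcomp Require Import topology normedtype one_point_compactification.
From mathcomp Require Import complex.
Set Implicit Arguments. Unset Strict Implicit. Unset Printing Implicit Defensive.
Import Order.TTheory GRing.Theory Num.Theory.
Local Open Scope ring_scope.

(* The extended real line  R-bar = R u {oo}  with its one-point
   compactification topology; [None] is the point oo. *)
Notation ext R := (one_point_compactification (R^o)%type).

Section Defs.
Variable R : realType.
Local Notation ext := (ext R).

Definition mobius (a b c d : R) (x : ext) : ext :=
  match x with
  | Some r => if c * r + d == 0 then None else Some ((a * r + b) / (c * r + d))
  | None => if c == 0 then None else Some (a / c)
  end.

Definition ext_lt (x y : ext) : bool :=
  match x, y with Some a, Some b => a < b | _, _ => false end.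

(* (t_0, ..., t_m) is cyclically ordered: no repetitions and some
   f in PSL(2,R) (a d - b c = 1) has f t_0 = oo, f t_1 < ... < f t_m. *)
Definition cyc_ordered (s : seq ext) : Prop :=
  uniq s /\ exists a b c d : R, a * d - b * c = 1 /\
    mobius a b c d (head None s) = None /\
    sorted ext_lt (map (mobius a b c d) (behead s)).

(* x in [a, b) = (a, b) u {a}, where (a, b) = {c | (a, c, b) cyclically ordered} *)
Definition in_cint_co (a b x : ext) : Prop := x = a \/ cyc_ordered [:: a; x; b].

(* The integral divisor D_n^oo >= 0 is given by the multiset Ds of its
   points in R-bar (with multiplicity):  D_n^oo(c) = count_mem c Ds. *)
Definition divD (Ds : seq ext) (c : ext) : nat := count_mem c Ds.

(* its value at a point of the Riemann sphere: finite complex points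
   (D is supported in R-bar, so it vanishes at non-real points) *)
Definition divD_C (Ds : seq ext) (z : R[i]) : nat :=
  count (fun x : ext => if x is Some r then (r%:C)%C == z else false) Ds.

Definition signS (Ds : seq ext) (xs x : ext) : nat :=
  (\sum_(c <- Ds | c != xs) (if `[< in_cint_co xs c x >] then 1 else 0))%N.

Definition cpoly (p : {poly R}) : {poly R[i]} :=
  map_poly (fun r : R => (r%:C)%C) p.

Definition ordC (p q : {poly R}) (z : R[i]) : int :=
  (mup z (cpoly p))%:Z - (mup z (cpoly q))%:Z.

Definition ord_inf (p q : {poly R}) : int := (size q)%:Z - (size p)%:Z.

Definition ordE (p q : {poly R}) (x : ext) : int :=
  match x with Some r => ordC p q (r%:C)%C | None => ord_inf p q end.

Definition poleC p q z : int := Num.max 0 (- ordC p q z).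
Definition pole_inf p q : int := Num.max 0 (- ord_inf p q).
Definition zeroE p q x : int := Num.max 0 (ordE p q x).
Definition poleE p q x : int := Num.max 0 (- ordE p q x).

Definition in_Ln (Ds : seq ext) (p q : {poly R}) : Prop :=
  (forall z : R[i], poleC p q z <= (divD_C Ds z)%:Z) /\
  pole_inf p q <= (divD Ds None)%:Z.

(* value of F = p/q (p, q coprime, q <> 0) at a point of R-bar;
   None means F has a pole there. *)
Definition ratval (p q : {poly R}) (x : ext) : option R :=
  match x with
  | Some r => if q.[r] == 0 then None else Some (p.[r] / q.[r])
  | None => if (size q < size p)%N then None
            else Some (if size p == size q then lead_coef p / lead_coef q
                       else 0)
  end.

Definition genD0 (Ds : seq ext) (p q : {poly R}) (x : ext) : int :=
  zeroE p q x + (divD Ds x)%:Z - poleE p q x.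

Definition alternation_set (E : set ext) (Ds : seq ext) (xstar : ext)
    (p q : {poly R}) (xs : seq ext) : Prop :=
  (forall x, x \in xs -> E x) /\
  cyc_ordered (xstar :: xs) /\
  (forall j : nat, (j < size xs)%N ->
     ratval p q (nth None xs j) =
       Some ((-1) ^ ((size xs)%:Z - (j.+1)%:Z
                     - (signS Ds xstar (nth None xs j))%:Z))).

End Defs.

From HB Require Import structures.
From mathcomp Require Import all_boot all_order all_algebra.
From mathcomp Require Import all_classical all_reals.
From mathcomp Require Import topology normedtype one_point_compactification.
From mathcomp Require Import complex polyrcf.
From mathcomp Require Import ring lra zify.
Set Implicit Arguments. Unset Strict Implicit. Unset Printing Implicit Defensive.
Import Order.TTheory GRing.Theory Num.Theory.
Local Open Scope ring_scope.

(* Since F lies in L_n, q divides the monic polynomial [denom] whose roots are the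
   finite points of D_n^oo, so F = numer / denom.  The chart at x_* (the coordinate
   y = x when x_* = oo, and y = 1/(x_* - x) otherwise) turns the cyclic order
   starting at x_* into the usual order of R; in it the numerator becomes a
   polynomial [interp] with interp(y) = F(x) * weight(y), where [weight] is denom
   transported to the chart.  Counting real roots, interp has at most n - D^0(x_* )
   roots.  Up to a constant factor, the sign of weight(y) is (-1)^S_n(x), so on an
   alternation set x_1, ..., x_m the values of interp alternate in sign and the
   intermediate value theorem yields m - 1 roots: hence m - 1 <= n - D^0(x_* ). *)

Lemma dvdp_mup_le (F : closedFieldType) (A B : {poly F}) :
  A != 0 -> B != 0 -> (forall z, (mup z A <= mup z B)%N) -> A %| B.
Proof.
elim: {A} (size A).+1 {-2}A (ltnSn (size A)) B => // N IH A szA B A0 B0 leAB.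
have [/eqP/size_poly1P [c c0 ->]|A_nconst] := eqVneq (size A) 1%N.
  by rewrite -[c%:P]mulr1 mul_polyC dvdpZl // dvd1p.
have [z rootAz] := closed_rootP A A_nconst.
have [A' defA] := factor_theorem _ _ rootAz.
have Xz0 : 'X - z%:P != 0 by rewrite polyXsubC_eq0.
have A'0 : A' != 0 by apply: contraNneq A0 => A'_0; rewrite defA A'_0 mul0r.
have : (0 < mup z B)%N by rewrite (leq_trans _ (leAB z)) // -XsubC_dvd // dvdp_XsubCl.
rewrite -XsubC_dvd // dvdp_XsubCl => /factor_theorem [B' defB].
have B'0 : B' != 0 by apply: contraNneq B0 => B'_0; rewrite defB B'_0 mul0r.
rewrite defA defB dvdp_mul2r //; apply: IH => // [|w].
  by rewrite -ltnS (leq_trans _ szA) // defA size_mul // size_XsubC addn2.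
by have := leAB w; rewrite defA defB !mupM // leq_add2r.
Qed.

Lemma alternating_roots (R : rcfType) (T : {poly R}) (s : R) (ys : seq R) :
  sorted <%R ys -> (forall j, (j < size ys)%N -> 0 < s * (-1) ^+ j * T.[ys`_j]) ->
  exists zs, [/\ sorted <%R zs, all (root T) zs & (size ys <= (size zs).+1)%N].
Proof.
case: ys => [|y0 ys] sorted_ys alt; first by exists [::].
suff [zs [size_zs path_zs roots_zs]] :
    exists zs, [/\ size zs = size ys, path <%R y0 zs & all (root T) zs].
  by exists zs; split => //; [exact: path_sorted path_zs | rewrite size_zs].
elim: ys y0 s sorted_ys alt => [|y1 ys IH] y0 s; first by exists [::].
move=> /= /andP [lt01 path1] alt.
have sign_change : T.[y0] * T.[y1] < 0.
  have := alt 0%N isT; have := alt 1%N isT; rewrite /= expr0 expr1 mulr1.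
  by move=> pos1 pos0; nra.
have [z /andP [gt0z ltz1] rootz] : exists2 z, y0 < z < y1 & root T z.
  by have [z] := poly_ivtoo (ltW lt01) sign_change; rewrite in_itv /=; exists z.
have alt1 : forall j, (j < size (y1 :: ys))%N ->
    0 < - s * (-1) ^+ j * T.[(y1 :: ys)`_j].
  by move=> j lt_j; have := alt j.+1 lt_j; rewrite exprS /= mulrA mulrN1.
have [zs [size_zs path_zs roots_zs]] := IH y1 (- s) path1 alt1.
exists (z :: zs); split; [by rewrite /= size_zs | | by rewrite /= rootz].
rewrite /= gt0z /=; case: zs path_zs {size_zs roots_zs} => //= w zs /andP [lt1w ->].
by rewrite (lt_trans ltz1 lt1w).
Qed.

Lemma prod_subr_sign (R : realDomainType) (ks : seq R) (y : R) : y \notin ks ->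
  0 < \prod_(k <- ks) (y - k) * (-1) ^+ count (fun k => y < k) ks.
Proof.
elim: ks => [|k ks IH]; first by rewrite big_nil mul1r ltr01.
rewrite inE negb_or big_cons /= exprD => /andP [yk /IH pos_ks].
rewrite mulrACA mulr_gt0 //; case: ltrP => [lt_yk|le_ky].
  by rewrite expr1 mulrN1 oppr_gt0 subr_lt0.
by rewrite expr0 mulr1 subr_gt0 lt_neqAle eq_sym yk.
Qed.

(* The polynomial y |-> y^n P(a - 1/y): P written in the coordinate
   y = 1/(a - x), which sends a to infinity and infinity to 0. *)
Definition recip_poly (F : fieldType) (a : F) (n : nat) (P : {poly F}) : {poly F} :=
  \sum_(i < n.+1) P`_i *: ((a *: 'X - 1) ^+ i * 'X ^+ (n - i)).

Section RecipPoly.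
Variables (F : fieldType) (a : F) (n : nat) (P : {poly F}).

Lemma recip_poly_nz (y : F) : (size P <= n.+1)%N -> y != 0 ->
  (recip_poly a n P).[y] = y ^+ n * P.[a - y^-1].
Proof.
move=> sizeP y0; rewrite (horner_coef_wide _ sizeP) mulr_sumr horner_sum.
apply: eq_bigr => i _; rewrite hornerZ hornerM hornerXn horner_exp !hornerE /=.
have -> : y ^+ n = y ^+ i * y ^+ (n - i) by rewrite -exprD subnKC // -ltnS.
have -> : a * y - 1 = (a - y^-1) * y by field.
by rewrite exprMn; ring.
Qed.

Lemma recip_poly0 : (recip_poly a n P).[0] = P`_n * (-1) ^+ n.
Proof.
rewrite horner_sum big_ord_recr /= subnn expr0 mulr1 hornerZ big1 ?add0r.
  by rewrite horner_exp !hornerE.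
move=> i _; rewrite hornerZ hornerM hornerXn expr0n /=.
by rewrite subn_eq0 leqNgt ltn_ord /= mulr0n !mulr0.
Qed.

(* If (X - a)^k divides P, then recip_poly a n P has at most n - k roots: its
   nonzero roots y give distinct roots a - 1/y <> a of P / (X - a)^k, and 0 is a
   root only when deg P < n. *)
Lemma recip_poly_roots k (zs : seq F) : P != 0 -> (size P <= n.+1)%N ->
  ('X - a%:P) ^+ k %| P -> uniq zs -> all (root (recip_poly a n P)) zs ->
  (size zs + k <= n)%N.
Proof.
move=> P0 sizeP dvdP uniq_zs roots_zs.
set P' := P %/ ('X - a%:P) ^+ k.
have defP : P = P' * ('X - a%:P) ^+ k by rewrite divpK.
have P'0 : P' != 0 by apply: contraNneq P0 => P'_0; rewrite defP P'_0 mul0r.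
have sizeP' : size P = (size P' + k)%N.
  by rewrite defP size_mul ?size_exp_XsubC ?addnS // expf_neq0 // polyXsubC_eq0.
set nzs : seq F := [seq z <- zs | z != 0].
have roots_P' : all (root P') [seq a - z^-1 | z <- nzs].
  apply/allP => x /mapP [z + ->]; rewrite mem_filter => /andP [z0 zin].
  have := allP roots_zs z zin; rewrite /root recip_poly_nz // mulf_eq0 expf_eq0.
  rewrite (negbTE z0) andbF /= defP hornerM mulf_eq0 horner_exp hornerXsubC.
  by rewrite expf_eq0 addrAC subrr add0r oppr_eq0 invr_eq0 (negbTE z0) andbF orbF.
have uniq_roots : uniq [seq a - z^-1 | z <- nzs].
  rewrite map_inj_in_uniq ?filter_uniq // => z w _ _ /addrI /oppr_inj.
  exact: invr_inj.
have roots_bound := max_poly_roots P'0 roots_P' uniq_roots.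
have split_zs : size zs = (size nzs + ((0%R : F) \in zs))%N.
  rewrite size_filter -(count_uniq_mem (0 : F) uniq_zs) -(count_predC (fun z : F => z != 0)).
  by congr (_ + _)%N; apply: eq_count => z /=; rewrite negbK eq_sym.
have zero_root_deg : (0 : F) \in zs -> size P != n.+1.
  move=> zero_root; apply: contraNneq P0 => sizePn; rewrite -lead_coef_eq0 lead_coefE sizePn.
  by have := allP roots_zs _ zero_root; rewrite /root recip_poly0 mulf_eq0 signr_eq0 orbF.
rewrite size_map in roots_bound; move: roots_bound split_zs sizeP sizeP' zero_root_deg.
set m := size P'; set m0 := size nzs; set sP := size P.
case: ((0 : F) \in zs) => /= roots_bound split_zs sizeP sizeP' zero_root_deg; last by lia.
by have := zero_root_deg isT; lia.
Qed.

End RecipPoly.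

Section Chart.
Variable R : realType.
Local Notation ext := (ext R).

Definition chart (xs x : ext) : R :=
  match xs, x with
  | None, Some r => r
  | Some a, Some r => (a - r)^-1
  | _, _ => 0
  end.

Lemma chart_inj (xs x c : ext) : x != xs -> c != xs -> x != c ->
  chart xs x != chart xs c.
Proof.
case: xs x c => [a|] [r|] [c|] //= neq_rx neq_cx neq_rc.
- apply: contra neq_rc => /eqP /invr_inj eq_ac.
  by apply/eqP; congr Some; lra.
- by rewrite invr_eq0 subr_eq0; apply: contra neq_rx => /eqP ->.
- by rewrite eq_sym invr_eq0 subr_eq0; apply: contra neq_cx => /eqP ->.
Qed.

Lemma sorted_affine (al be : R) (s : seq R) : 0 < al ->
  sorted (@ext_lt R) [seq Some (al * t + be) : ext | t <- s] = sorted <%R s.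
Proof.
move=> al_gt0; case: s => [|t s] //=; rewrite path_map; apply: eq_path => u v /=.
by rewrite ltrD2r ltr_pM2l.
Qed.

Lemma mobius_chart a b c d (xs : ext) : a * d - b * c = 1 ->
  mobius a b c d xs = None ->
  exists al be : R, 0 < al /\
    forall x, x != xs -> mobius a b c d x = Some (al * chart xs x + be).
Proof.
move=> det; case: xs => [s|] /=.
- case: ifP => // /eqP pole_s _.
  have defd : d = - (c * s) by apply/eqP; rewrite -addr_eq0 addrC pole_s.
  have c0 : c != 0.
    apply/eqP => c0; move: det; rewrite defd c0 !(mulr0, mul0r, oppr0, subr0).
    by move/eqP; rewrite eq_sym oner_eq0.
  have defb : b = - c^-1 - a * s.
    apply: (mulfI c0); rewrite mulrBr mulrN mulfV //.
    transitivity (- (a * (- (c * s)) - b * c) - c * (a * s)); first by ring.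
    by rewrite -defd det.
  exists (c^-2), (a / c); split; first by rewrite exprnN invr_gt0 exprn_even_gt0.
  case=> [r|] neq_rs /=; last by rewrite (negbTE c0) mulr0 add0r.
  have rs0 : r - s != 0 by rewrite subr_eq0; apply: contra neq_rs => /eqP ->.
  rewrite defd -mulrN -mulrDr mulf_eq0 (negbTE c0) /= (negbTE rs0).
  by congr Some; rewrite defb; field; rewrite c0 rs0 subr_eq0 eq_sym -subr_eq0 rs0.
- case: ifP => // /eqP c0 _; move: det; rewrite c0 mulr0 subr0 => det.
  have d0 : d != 0 by apply/eqP => d0; move: det; rewrite d0 mulr0 => /eqP; rewrite eq_sym oner_eq0.
  have defa : a = d^-1 by apply: (mulIf d0); rewrite det mulVf.
  exists (d^-2), (b / d); split; first by rewrite exprnN invr_gt0 exprn_even_gt0.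
  by case=> [r|] //= _; rewrite mul0r add0r (negbTE d0) defa; congr Some; field.
Qed.

Lemma chart_mobius (xs : ext) : exists a b c d : R, a * d - b * c = 1 /\
  mobius a b c d xs = None /\
  forall x, x != xs -> mobius a b c d x = Some (1 * chart xs x + 0).
Proof.
case: xs => [s|].
- exists 0, (-1), 1, (-s); split; first by ring.
  split; first by rewrite /= mul1r subrr eqxx.
  case=> [r|] neq_rs /=; last by rewrite oner_eq0 mulr0 addr0 mul0r.
  have rs0 : r - s != 0 by rewrite subr_eq0; apply: contra neq_rs => /eqP ->.
  rewrite mul1r (negbTE rs0); congr Some; field.
  by rewrite rs0 andbT subr_eq0 eq_sym -subr_eq0.
- exists 1, 0, 0, 1; split; first by ring.
  split; first by rewrite /= eqxx.
  by case=> [r|] // _ /=; rewrite mul0r add0r oner_eq0; congr Some; field.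
Qed.

Lemma cyc_ordered_chart (xs : ext) (l : seq ext) :
  cyc_ordered (xs :: l) <-> uniq (xs :: l) /\ sorted <%R (map (chart xs) l).
Proof.
have affine_sorted a b c d al be : 0 < al -> uniq (xs :: l) ->
    (forall x, x != xs -> mobius a b c d x = Some (al * chart xs x + be)) ->
    sorted (@ext_lt R) (map (mobius a b c d) l) = sorted <%R (map (chart xs) l).
  move=> al_gt0 /= /andP [xs_notin _] mob.
  rewrite -(sorted_affine be _ al_gt0) -map_comp; congr sorted.
  by apply/eq_in_map => x x_in /=; apply: mob; apply: contraNneq xs_notin => <-.
split.
- move=> [uniq_l [a [b [c [d [det [pole_xs sorted_l]]]]]]]; split => //.
  have [al [be [al_gt0 mob]]] := mobius_chart det pole_xs.
  by rewrite -(affine_sorted a b c d al be).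
- move=> [uniq_l sorted_l]; split => //.
  have [a [b [c [d [det [pole_xs mob]]]]]] := chart_mobius xs.
  exists a, b, c, d; do 2!split => //=.
  by rewrite (affine_sorted a b c d 1 0) // ltr01.
Qed.

Lemma in_cint_chart (xs c x : ext) : x != xs -> c != xs -> x != c ->
  (in_cint_co xs c x <-> chart xs x < chart xs c).
Proof.
move=> neq_x neq_c neq_xc; rewrite /in_cint_co cyc_ordered_chart /=.
rewrite !inE !negb_or (eq_sym xs x) (eq_sym xs c) neq_x neq_c neq_xc andbT /=.
split=> [[eq_x|[_ /andP []]] // | lt_xc]; last by right; rewrite /= lt_xc.
by move: neq_x; rewrite eq_x eqxx.
Qed.

Lemma signS_chart (Ds : seq ext) (xs x : ext) : x != xs -> x \notin Ds ->
  signS Ds xs x = count (fun c => (c != xs) && (chart xs x < chart xs c)) Ds.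
Proof.
move=> neq_x; rewrite /signS; elim: Ds => [|c Ds IH]; first by rewrite big_nil.
rewrite inE negb_or big_cons /= => /andP [neq_xc x_notin]; rewrite IH //.
have [->|neq_c] //= := eqVneq c xs.
by case: (asboolP _) => [/in_cint_chart -> | /in_cint_chart /negP/negbTE ->].
Qed.

End Chart.

Section Weight.
Variable R : realType.
Local Notation ext := (ext R).
Implicit Types (Ds : seq ext) (xs : ext).

Definition denom Ds : {poly R} := \prod_(r <- pmap id Ds) ('X - r%:P).

Lemma monic_denom Ds : denom Ds \is monic.
Proof. exact: monic_prod_XsubC. Qed.

Lemma denom_neq0 Ds : denom Ds != 0.
Proof. exact/monic_neq0/monic_denom. Qed.

Lemma size_denom Ds : (size (denom Ds) + count_mem None Ds = (size Ds).+1)%N.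
Proof.
rewrite size_prod_XsubC addSn; congr _.+1.
by elim: Ds => [|[r|] Ds IH] //=; rewrite -IH ?addnS.
Qed.

Lemma denom_cons_Some r Ds : denom (Some r :: Ds) = ('X - r%:P) * denom Ds.
Proof. by rewrite /denom /= big_cons. Qed.

Lemma denom_cons_None Ds : denom (None :: Ds) = denom Ds.
Proof. by []. Qed.

Lemma dvdp_denom (a : R) Ds : ('X - a%:P) ^+ count_mem (Some a) Ds %| denom Ds.
Proof.
elim: Ds => [|[r|] Ds IH] /=; first by rewrite expr0 dvd1p.
  rewrite denom_cons_Some; have [[->]|_] /= := eqVneq (Some r) (Some a).
    by rewrite add1n exprS dvdp_mul2l // polyXsubC_eq0.
  by rewrite add0n dvdp_mull.
by rewrite denom_cons_None.
Qed.

(* Normalising constant of the factor of the weight attached to c, chosen so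
   that the weight is exactly the transported denominator (weight_Some). *)
Definition wconst xs (c : ext) : R :=
  match xs, c with
  | Some a, Some c' => if c' == a then -1 else a - c'
  | _, _ => 1
  end.

Lemma wconst_neq0 xs c : wconst xs c != 0.
Proof.
case: xs c => [a|] [c|] //=; rewrite ?oner_neq0 //.
by case: ifP => [_|/negbT]; rewrite ?oppr_eq0 ?oner_neq0 // subr_eq0 eq_sym.
Qed.

(* The weight: denom (the denominator of the elements of L_n) transported to
   the chart at xs; in that chart its roots are the points of D_n^oo. *)
Definition weight xs Ds (y : R) : R :=
  \prod_(c <- Ds) (wconst xs c * (if c != xs then y - chart xs c else 1)).

(* Off the divisor, the weight at x has the sign of (-1)^S_n(x) times the
   constant prod wconst: its factors y - chart c are negative exactly for the
   points c counted by S_n(x). *)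
Lemma weight_sign xs Ds x : x != xs -> x \notin Ds ->
  0 < weight xs Ds (chart xs x) * \prod_(c <- Ds) wconst xs c * (-1) ^+ signS Ds xs x.
Proof.
move=> neq_x x_notin; rewrite signS_chart // /weight big_split /= -big_mkcond /=.
set L := \prod_(c <- Ds) wconst xs c.
set ks := [seq chart xs c | c <- Ds & c != xs].
have -> : count (fun c => (c != xs) && (chart xs x < chart xs c)) Ds =
          count (fun k => chart xs x < k) ks.
  by rewrite count_map count_filter; apply: eq_count => c /=; rewrite andbC.
rewrite -(big_filter _ (fun c => c != xs)) -(big_map (chart xs) xpredT (fun k => chart xs x - k)).
have L0 : L != 0 by rewrite prodf_seq_neq0; apply/allP => c _; exact: wconst_neq0.
have -> : L * \prod_(k <- ks) (chart xs x - k) * L * (-1) ^+ count (fun k => chart xs x < k) ks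
    = L ^+ 2 * (\prod_(k <- ks) (chart xs x - k) * (-1) ^+ count (fun k => chart xs x < k) ks).
  by ring.
rewrite mulr_gt0 ?exprn_even_gt0 ?L0 // prod_subr_sign //.
apply/mapP => -[c]; rewrite mem_filter => /andP [neq_c c_in] /eqP.
by apply/negP/chart_inj => //; apply: contraNneq x_notin => ->.
Qed.

Lemma weight_None Ds r : weight None Ds r = (denom Ds).[r].
Proof.
rewrite /weight; elim: Ds => [|[c|] Ds IH]; first by rewrite big_nil /denom big_nil hornerC.
  by rewrite big_cons denom_cons_Some hornerM IH /= mul1r hornerXsubC.
by rewrite big_cons denom_cons_None IH /= !mul1r.
Qed.

Lemma weight_Some (a r : R) Ds : r != a ->
  weight (Some a) Ds (a - r)^-1 = ((a - r)^-1) ^+ size Ds * (denom Ds).[r].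
Proof.
move=> neq_ra; have ar0 : a - r != 0 by rewrite subr_eq0 eq_sym.
rewrite /weight; elim: Ds => [|[c|] Ds IH]; first by rewrite big_nil /denom big_nil hornerC mulr1.
  rewrite big_cons denom_cons_Some hornerM IH /= hornerXsubC exprS.
  have [[->]|neq_ca] := eqVneq (Some c) (Some a).
    rewrite !eqxx /=; have -> : -1 = (a - r)^-1 * (r - a) by field.
    by ring.
  have ca : (c == a) = false by apply/negbTE; apply: contra neq_ca => /eqP ->.
  rewrite ca /=; have ac0 : a - c != 0 by rewrite subr_eq0 eq_sym ca.
  have -> : (a - c) * ((a - r)^-1 - (a - c)^-1) = (a - r)^-1 * (r - c).
    by field; rewrite ar0 ac0.
  by ring.
by rewrite big_cons denom_cons_None IH /= mul1r subr0 exprS mulrA.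
Qed.

Lemma weight_Some_inf (a : R) Ds : None \notin Ds ->
  weight (Some a) Ds 0 = (-1) ^+ size Ds.
Proof.
rewrite /weight; elim: Ds => [|[c|] Ds IH]; first by rewrite big_nil.
  rewrite inE negb_or => /andP [_ None_notin]; rewrite big_cons IH // exprS /=.
  have [[->]|neq_ca] := eqVneq (Some c) (Some a); first by rewrite !eqxx /= mulr1.
  have ca : (c == a) = false by apply/negbTE; apply: contra neq_ca => /eqP ->.
  rewrite ca /=; have ac0 : a - c != 0 by rewrite subr_eq0 eq_sym ca.
  by rewrite sub0r mulrN mulfV.
by rewrite inE eqxx.
Qed.

Lemma alternation_signs xs Ds (T : {poly R}) (l : seq ext) :
  (forall x, x \in l -> x != xs /\ x \notin Ds) ->
  (forall j, (j < size l)%N -> T.[chart xs (nth None l j)] =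
     (-1) ^ ((size l)%:Z - (j.+1)%:Z - (signS Ds xs (nth None l j))%:Z) *
     weight xs Ds (chart xs (nth None l j))) ->
  exists s : R, forall j, (j < size l)%N ->
    0 < s * (-1) ^+ j * T.[(map (chart xs) l)`_j].
Proof.
move=> generic T_val; set L := \prod_(c <- Ds) wconst xs c.
exists (- (-1) ^+ size l * L) => j lt_j; rewrite (nth_map None) // T_val //.
have [neq_x x_notin] := generic _ (mem_nth None lt_j).
have := weight_sign neq_x x_notin; rewrite -/L.
set S := signS Ds xs _; set w := weight xs Ds _ => pos.
have m1 : (-1 : R) != 0 by rewrite oppr_eq0 oner_eq0.
rewrite !expfzDr // -!exprnN !invr_sign -!exprnP.
have -> : - (-1) ^+ size l * L * (-1) ^+ j * ((-1) ^+ size l * (-1) ^+ j.+1 * (-1) ^+ S * w)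
    = (w * L * (-1) ^+ S) * (((-1) ^+ size l) ^+ 2 * ((-1) ^+ j) ^+ 2 : R).
  by rewrite exprS; ring.
by rewrite !sqrr_sign !mulr1.
Qed.

End Weight.

Lemma genD0E (R : realType) (Ds : seq (ext R)) (p q : {poly R}) x :
  genD0 Ds p q x = ordE p q x + (divD Ds x)%:Z.
Proof.
rewrite /genD0 /zeroE /poleE.
by case: (ler0P (ordE p q x)) => ?; case: (ler0P (- ordE p q x)) => ?; lia.
Qed.

Lemma dvdp_cpoly (R : realType) (u w : {poly R}) : (cpoly u %| cpoly w) = (u %| w).
Proof. exact: dvdp_map. Qed.

Lemma divD_C_count (R : realType) (Ds : seq (ext R)) z :
  divD_C Ds z = count_mem z [seq (r%:C)%C | r <- pmap id Ds].
Proof. by rewrite /divD_C; elim: Ds => [|[r|] Ds IH] //=; rewrite IH eq_sym. Qed.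

Section RationalFunction.
Variable R : realType.
Local Notation ext := (ext R).
Variables (Ds : seq ext) (p q : {poly R}).
Hypotheses (q_neq0 : q != 0) (p_neq0 : p != 0) (coprime_pq : coprimep p q).
Hypothesis F_in_Ln : in_Ln Ds p q.

Lemma mup_q_le z : (mup z (cpoly q) <= divD_C Ds z)%N.
Proof.
have := F_in_Ln.1 z; rewrite /poleC /ordC.
have [->|mq0] := eqVneq (mup z (cpoly q)) 0%N; first by [].
have root_q : root (cpoly q) z.
  by rewrite -dvdp_XsubCl XsubC_dvd ?map_poly_eq0 // lt0n.
have coprime_qp : coprimep (cpoly q) (cpoly p) by rewrite coprimep_map coprimep_sym.
rewrite (mupNroot (coprimep_root coprime_qp root_q)) sub0r opprK => le_mq.
by rewrite -lez_nat (le_trans _ le_mq) // le_max lexx orbT.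
Qed.

Lemma dvdp_q_denom : q %| denom Ds.
Proof.
have cdenom : cpoly (denom Ds) = \prod_(w <- [seq (r%:C)%C | r <- pmap id Ds]) ('X - w%:P).
  by rewrite /cpoly rmorph_prod big_map; apply: eq_bigr => r _; exact: map_polyXsubC.
rewrite -dvdp_cpoly; apply: dvdp_mup_le; rewrite ?map_poly_eq0 ?denom_neq0 // => z.
by rewrite cdenom mu_prod_XsubC -divD_C_count mup_q_le.
Qed.

Definition numer : {poly R} := p * (denom Ds %/ q).

Lemma numer_eq : numer * q = p * denom Ds.
Proof. by rewrite /numer -mulrA divpK ?dvdp_q_denom. Qed.

Lemma numer_neq0 : numer != 0.
Proof.
rewrite mulf_neq0 //; apply: contra_neq (denom_neq0 Ds) => quot0.
by rewrite -(divpK dvdp_q_denom) quot0 mul0r.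
Qed.

Lemma numer_value r : q.[r] != 0 -> numer.[r] = p.[r] / q.[r] * (denom Ds).[r].
Proof.
move=> qr0; have := congr1 (horner^~ r) numer_eq; rewrite /= !hornerM => eq_r.
by apply: (mulIf qr0); rewrite eq_r; field.
Qed.

Lemma size_numer : (size numer + size q = size p + size (denom Ds))%N.
Proof.
have numer0 := numer_neq0; have denom0 := denom_neq0 Ds.
have := congr1 (fun u : {poly R} => size u) numer_eq.
rewrite (size_mul numer0 q_neq0) (size_mul p_neq0 denom0).
have := size_poly_gt0 numer; have := size_poly_gt0 q; have := size_poly_gt0 p.
have := size_poly_gt0 (denom Ds); rewrite numer0 q_neq0 p_neq0 denom0.
move: (size numer) (size q) (size p) (size (denom Ds)) => a b c d; lia.
Qed.

Lemma size_numer_genD0 : (size numer)%:Z = (size Ds)%:Z + 1 - genD0 Ds p q None.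
Proof.
rewrite genD0E /= /ord_inf /divD.
have := size_numer; have := size_denom Ds.
move: (size numer) (size q) (size p) (size (denom Ds)) (count_mem None Ds) (size Ds) => a b c d e f; lia.
Qed.

Lemma size_numer_le : (size numer <= (size Ds).+1)%N.
Proof.
have := F_in_Ln.2; rewrite /pole_inf /ord_inf /divD => pole_bound.
have : (size p)%:Z - (size q)%:Z <= (count_mem None Ds)%:Z.
  by apply: le_trans pole_bound; rewrite le_max opprB lexx orbT.
have := size_numer; have := size_denom Ds.
move: (size numer) (size q) (size p) (size (denom Ds)) => a b c d; lia.
Qed.

Lemma numer_coef_inf v : None \notin Ds -> ratval p q None = Some v ->
  numer`_(size Ds) = v.
Proof.
move=> /count_memPn None_notin /=; case: ifP => // /negbT le_qp [<-].
have sizes := size_numer; have := size_denom Ds; rewrite None_notin addn0 => size_denomE.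
rewrite size_denomE in sizes.
have [eq_pq|neq_pq] := eqVneq (size p) (size q).
  have sizeN : size numer = (size Ds).+1.
    by move: sizes; rewrite eq_pq [(size numer + _)%N]addnC => /addnI.
  have := congr1 lead_coef numer_eq.
  rewrite (lead_coefM numer q) (lead_coefM p (denom Ds)) (monicP (monic_denom Ds)) mulr1.
  rewrite [lead_coef numer]lead_coefE sizeN /= => <-.
  by rewrite mulfK // lead_coef_eq0.
rewrite nth_default //; move: le_qp neq_pq sizes; rewrite -leqNgt.
by move: (size numer) (size q) (size p) (size Ds) => a b c d /= ? /eqP ? ?; lia.
Qed.

Lemma numer_mult (a : R) :
  exists k : nat, ('X - a%:P) ^+ k %| numer /\ genD0 Ds p q (Some a) <= k%:Z.
Proof.
set mp := mup (a%:C)%C (cpoly p); set mq := mup (a%:C)%C (cpoly q).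
set ca := count_mem (Some a) Ds; set j := mup a q.
have XaC k : cpoly (('X - a%:P) ^+ k) = ('X - (a%:C)%C%:P) ^+ k.
  by rewrite /cpoly rmorphXn /= map_polyXsubC.
have dvd_q : ('X - a%:P) ^+ j %| q by rewrite -mup_geq.
have le_jmq : (j <= mq)%N.
  by rewrite /mq mup_geq ?map_poly_eq0 // -XaC dvdp_cpoly.
have dvd_p : ('X - a%:P) ^+ mp %| p.
  by rewrite -dvdp_cpoly XaC -mup_geq ?map_poly_eq0.
set q' := q %/ ('X - a%:P) ^+ j.
have defq : q = q' * ('X - a%:P) ^+ j by rewrite divpK.
have coprime_q' : coprimep (('X - a%:P) ^+ (mp + ca)) q'.
  apply: coprimep_expl; rewrite coprimep_sym coprimep_XsubC; apply/negP => root_q'.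
  have : ('X - a%:P) ^+ j.+1 %| q by rewrite exprS defq dvdp_mul // dvdp_XsubCl.
  by rewrite -mup_geq // ltnn.
have dvd_numer : ('X - a%:P) ^+ (mp + ca) %| numer * ('X - a%:P) ^+ j.
  have : ('X - a%:P) ^+ (mp + ca) %| p * denom Ds by rewrite exprD dvdp_mul ?dvdp_denom.
  by rewrite -numer_eq defq mulrA mulrAC Gauss_dvdpl.
exists (mp + ca - j)%N; split.
  have [le_j|lt_j] := leqP (mp + ca) j; first by rewrite (eqP le_j) expr0 dvd1p.
  have Xj0 : ('X - a%:P) ^+ j != 0 by rewrite expf_neq0 // polyXsubC_eq0.
  by rewrite -(dvdp_mul2r _ _ Xj0) -exprD subnK // ltnW.
rewrite genD0E /= /ordC -/mp -/mq /divD -/ca; lia.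
Qed.

Variable xstar : ext.

Definition interp : {poly R} :=
  if xstar is Some a then recip_poly a (size Ds) numer else numer.

Lemma interp_value x v : x != xstar -> x \notin Ds -> ratval p q x = Some v ->
  interp.[chart xstar x] = v * weight xstar Ds (chart xstar x).
Proof.
rewrite /interp; case: xstar x => [a|] [r|] //= neq_x x_notin.
- case: ifP => // /negbT qr0 [<-].
  have neq_ra : r != a by apply: contra neq_x => /eqP ->.
  have y0 : (a - r)^-1 != 0 by rewrite invr_eq0 subr_eq0 eq_sym.
  rewrite recip_poly_nz ?size_numer_le // invrK weight_Some //.
  have -> : a - (a - r) = r by ring.
  by rewrite numer_value //; ring.
- by move=> /(numer_coef_inf x_notin) <-; rewrite recip_poly0 weight_Some_inf.
- by case: ifP => // /negbT qr0 [<-]; rewrite weight_None numer_value.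
Qed.

Lemma interp_roots zs : uniq zs -> all (root interp) zs ->
  (size zs)%:Z + genD0 Ds p q xstar <= (size Ds)%:Z.
Proof.
move=> uniq_zs; rewrite /interp; case: xstar => [a|] roots_zs /=.
  have [k [dvd_numer le_D0]] := numer_mult a.
  have := recip_poly_roots numer_neq0 size_numer_le dvd_numer uniq_zs roots_zs.
  by move: le_D0; move: (genD0 _ _ _ _) (size zs) => g m; lia.
have := max_poly_roots numer_neq0 roots_zs uniq_zs; have := size_numer_genD0.
move: (size numer) (genD0 _ _ _ _) (size zs) => a b m; lia.
Qed.

End RationalFunction.

Local Open Scope classical_set_scope.

Theorem theorem2p4 (R : realType) (E : set (ext R)) (n : nat)
    (Ds : seq (ext R)) (xstar : ext R) (p q : {poly R}) :
  compact E -> E <> setT -> infinite_set E ->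
  (1 <= n)%N -> size Ds = n -> (forall c, c \in Ds -> ~ E c) ->
  ~ E xstar ->
  q != 0 -> coprimep p q ->
  in_Ln Ds p q ->
  (forall x, E x -> exists v, ratval p q x = Some v /\ `|v| <= 1) ->
  p != 0 ->
  forall xs : seq (ext R), alternation_set E Ds xstar p q xs ->
  (size xs)%:Z <= n%:Z + 1 - genD0 Ds p q xstar.
Proof.
move=> _ _ _ _ <- Ds_offE _ q0 coprime_pq F_in_Ln _ p0 xs [xs_inE [cyc alt]].
have [/= /andP [xstar_notin _] sorted_chart] := (cyc_ordered_chart xstar xs).1 cyc.
have generic x : x \in xs -> x != xstar /\ x \notin Ds.
  move=> x_in; split; first by apply: contraNneq xstar_notin => <-.
  by apply/negP => /Ds_offE; apply; exact: xs_inE.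
set T := interp Ds p q xstar.
have [s alt_T] : exists s : R, forall j, (j < size (map (chart xstar) xs))%N ->
    0 < s * (-1) ^+ j * T.[(map (chart xstar) xs)`_j].
  rewrite size_map; apply: (alternation_signs generic) => j lt_j.
  have [neq_x x_notin] := generic _ (mem_nth None lt_j).
  exact: interp_value neq_x x_notin (alt j lt_j).
have [zs [sorted_zs roots_zs]] := alternating_roots sorted_chart alt_T.
have := interp_roots q0 p0 coprime_pq F_in_Ln (lt_sorted_uniq sorted_zs) roots_zs.
rewrite size_map; move: (size xs) (size zs) (size Ds) (genD0 _ _ _ _) => m k d g.
lia.
Qed.
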